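(* Let $T$ be a complete theory and let $\varphi(\overline{x})$ be a $T$-formula having only finitely many solutions (in a model of $T$). Then $\varphi(\overline{x})$ is unary-tizable.
   Context: An expansion of a complete theory $T$ is a complete theory $T'$ in a language containing that of $T$ with $T\subseteq T'$. A $T$-formula $\varphi(\overline{x})$ is $n$-aritizable if $T$ has an expansion $T'$ such that $\varphi(\overline{x})$ is $T'$-equivalent to a Boolean combination of $T'$-formulas with $n$ free variables. Unary-tizable means $1$-aritizable. *)

From mathcomp Require Import all_boot.
From Stdlib Require List.
Set Implicit Arguments. Unset Strict Implicit. Unset Printing Implicit Defensive.

Record signature := Signature {
  Fsym : Type; Far : Fsym -> nat;
  Rsym : Type; Rar : Rsym -> nat }.

Section Syntax.
Variable L : signature.

Inductive term : Type :=
| Var : nat -> term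
| App : forall f : Fsym L, ('I_(Far f) -> term) -> term.

Inductive formula : Type :=
| FFalse : formula
| FEq : term -> term -> formula
| FRel : forall r : Rsym L, ('I_(Rar r) -> term) -> formula
| FNot : formula -> formula
| FAnd : formula -> formula -> formula
| FOr : formula -> formula -> formula
| FImp : formula -> formula -> formula
| FAll : nat -> formula -> formula
| FEx : nat -> formula -> formula.

Fixpoint occurs (x : nat) (t : term) : Prop :=
  match t with
  | Var y => x = y
  | App f args => exists i, occurs x (args i)
  end.

Fixpoint free (x : nat) (p : formula) : Prop :=
  match p with
  | FFalse => False
  | FEq t u => occurs x t \/ occurs x u
  | FRel r args => exists i, occurs x (args i)
  | FNot q => free x q
  | FAnd q s | FOr q s | FImp q s => free x q \/ free x s
  | FAll y q | FEx y q => x <> y /\ free x q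
  end.

Definition sentence (p : formula) : Prop := forall x, ~ free x p.

Definition at_most_free (n : nat) (p : formula) : Prop :=
  exists s : seq nat, size s <= n /\ forall x, free x p -> x \in s.

Inductive boolcomb (B : formula -> Prop) : formula -> Prop :=
| bc_base p : B p -> boolcomb B p
| bc_false : boolcomb B FFalse
| bc_not p : boolcomb B p -> boolcomb B (FNot p)
| bc_and p q : boolcomb B p -> boolcomb B q -> boolcomb B (FAnd p q)
| bc_or p q : boolcomb B p -> boolcomb B q -> boolcomb B (FOr p q)
| bc_imp p q : boolcomb B p -> boolcomb B q -> boolcomb B (FImp p q).

End Syntax.

(* Structures (with nonempty universe). *)
Record structure (L : signature) := Structure {
  carrier :> Type;
  point : carrier;
  funs : forall f : Fsym L, ('I_(Far f) -> carrier) -> carrier;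
  rels : forall r : Rsym L, ('I_(Rar r) -> carrier) -> Prop }.

Section Semantics.
Variables (L : signature) (M : structure L).

Fixpoint eval (e : nat -> M) (t : term L) : M :=
  match t with
  | Var x => e x
  | App f args => @funs L M f (fun i => eval e (args i))
  end.

Definition upd (e : nat -> M) (x : nat) (a : M) : nat -> M :=
  fun y => if y == x then a else e y.

Fixpoint sat (e : nat -> M) (p : formula L) : Prop :=
  match p with
  | FFalse => False
  | FEq t u => eval e t = eval e u
  | FRel r args => @rels L M r (fun i => eval e (args i))
  | FNot q => ~ sat e q
  | FAnd q s => sat e q /\ sat e s
  | FOr q s => sat e q \/ sat e s
  | FImp q s => sat e q -> sat e s
  | FAll x q => forall a : M, sat (upd e x a) q
  | FEx x q => exists a : M, sat (upd e x a) q
  end.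

Definition holds (p : formula L) : Prop := forall e, sat e p.

End Semantics.

Definition theory (L : signature) := formula L -> Prop.

Definition is_model (L : signature) (T : theory L) (M : structure L) : Prop :=
  forall s, T s -> holds M s.

Definition entails (L : signature) (T : theory L) (p : formula L) : Prop :=
  forall M : structure L, is_model T M -> holds M p.

Definition complete_theory (L : signature) (T : theory L) : Prop :=
  [/\ forall s, T s -> sentence s,
      exists M : structure L, is_model T M
    & forall s, sentence s -> entails T s \/ entails T (FNot s)].

Definition sig_expand (L E : signature) : signature :=
  {| Fsym := (Fsym L + Fsym E)%type;
     Far := fun s => match s with inl f => Far f | inr g => Far g end;
     Rsym := (Rsym L + Rsym E)%type;
     Rar := fun s => match s with inl r => Rar r | inr q => Rar q end |}.

Section Lift.
Variables L E : signature.

Fixpoint lift_term (t : term L) : term (sig_expand L E) :=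
  match t with
  | Var x => Var _ x
  | App f args => @App (sig_expand L E) (inl f) (fun i => lift_term (args i))
  end.

Fixpoint lift (p : formula L) : formula (sig_expand L E) :=
  match p with
  | FFalse => FFalse _
  | FEq t u => FEq (lift_term t) (lift_term u)
  | FRel r args => @FRel (sig_expand L E) (inl r) (fun i => lift_term (args i))
  | FNot q => FNot (lift q)
  | FAnd q s => FAnd (lift q) (lift s)
  | FOr q s => FOr (lift q) (lift s)
  | FImp q s => FImp (lift q) (lift s)
  | FAll x q => FAll x (lift q)
  | FEx x q => FEx x (lift q)
  end.
End Lift.

Definition expansion (L E : signature) (T : theory L) (T' : theory (sig_expand L E)) :=
  complete_theory T' /\ forall s, T s -> T' (lift E s).

Definition aritizable (n : nat) (L : signature) (T : theory L) (phi : formula L) : Prop :=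
  exists (E : signature) (T' : theory (sig_expand L E)),
    expansion T T' /\
    exists psi, boolcomb (at_most_free n) psi /\
      forall N : structure (sig_expand L E), is_model T' N ->
        forall e, @sat _ N e (lift E phi) <-> @sat _ N e psi.

Definition unary_tizable (L : signature) (T : theory L) (phi : formula L) : Prop :=
  aritizable 1 T phi.

(* Assignment induced by a k-tuple (variables >= k sent to the base point). *)
Definition env_of (L : signature) (M : structure L) (k : nat) (a : 'I_k -> M) : nat -> M :=
  fun x => match insub x with Some i => a i | None => point M end.

Definition finitely_many_solutions (L : signature) (M : structure L) (k : nat)
    (phi : formula L) : Prop :=
  exists l : list ('I_k -> M), forall a : 'I_k -> M,
    @sat _ M (env_of a) phi -> List.In a l.

(* Expand the language by a constant c_m for every element m of a model M in
   which phi has finitely many solutions, and take T' to be the complete theory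
   of this expansion of M.  In M, phi(x_0, ..., x_{k-1}) is equivalent to the
   disjunction, over its solutions a, of the conjunctions of the unary formulas
   x_j = c_{a_j}.  The universal closure of that equivalence is a sentence true
   in the expansion, hence a member of T', so it holds in every model of T'. *)

From Pilot Require Import Defs.
From mathcomp Require Import all_boot.
From Stdlib Require Import FunctionalExtensionality Classical.
Set Implicit Arguments. Unset Strict Implicit.

Section Coincidence.
Variables (L : signature) (N : structure L).

Lemma eval_agree (e e' : nat -> N) (t : term L) :
  (forall x, occurs x t -> e x = e' x) -> eval e t = eval e' t.
Proof.
elim: t => [y|f args IH] /= agree; first exact: agree.
by congr funs; apply: functional_extensionality => i; apply: IH => x hx; apply: agree; exists i.
Qed.

Lemma upd_agree (e e' : nat -> N) (P : nat -> Prop) y a :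
  (forall x, x <> y /\ P x -> e x = e' x) -> forall x, P x -> upd e y a x = upd e' y a x.
Proof. by move=> agree x Px; rewrite /upd; case: eqP => // nxy; apply: agree. Qed.

Lemma sat_agree (p : formula L) (e e' : nat -> N) :
  (forall x, free x p -> e x = e' x) -> (sat e p <-> sat e' p).
Proof.
elim: p e e' => [|t u|r args|q IH|q IHq s IHs|q IHq s IHs|q IHq s IHs|y q IH|y q IH]
  e e' agree /=.
- by [].
- by rewrite (eval_agree (e' := e') (t := t)) ?(eval_agree (e' := e') (t := u)) // => x hx;
    apply: agree; [right | left].
- suff -> : (fun i => eval e (args i)) = (fun i => eval e' (args i)) by [].
  by apply: functional_extensionality => i; apply: eval_agree => x hx; apply: agree; exists i.
- by rewrite (IH e e' agree).
- by rewrite (IHq e e') ?(IHs e e') // => x hx; apply: agree; [right | left].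
- by rewrite (IHq e e') ?(IHs e e') // => x hx; apply: agree; [right | left].
- by rewrite (IHq e e') ?(IHs e e') // => x hx; apply: agree; [right | left].
- have IHa a := IH (upd e y a) (upd e' y a) (upd_agree a agree).
  by split=> h a; apply/IHa.
- have IHa a := IH (upd e y a) (upd e' y a) (upd_agree a agree).
  by split=> -[a /IHa h]; exists a.
Qed.

End Coincidence.

Section Closure.
Variable L : signature.

Fixpoint close_all (n : nat) (p : formula L) : formula L :=
  match n with 0 => p | n.+1 => FAll n (close_all n p) end.

Lemma free_close_all n p x : free x (close_all n p) -> free x p /\ n <= x.
Proof.
elim: n => [|n IH] //= [nx /IH [fx le]]; split=> //.
by rewrite ltn_neqAle le andbT; apply/eqP=> enx; apply: nx.
Qed.

Lemma close_all_sentence n p : (forall x, free x p -> x < n) -> sentence (close_all n p).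
Proof. by move=> bound x /free_close_all [/bound]; rewrite ltnNge => /negP. Qed.

Lemma holds_close_all (N : structure L) n p : holds N (close_all n p) <-> holds N p.
Proof.
elim: n => [|n <-] //; split=> h e; last by move=> a; apply: h.
have h' : sat (upd e n (e n)) (close_all n p) := h e (e n).
apply/(sat_agree _ (e := upd e n (e n))) => // x _.
by rewrite /upd; case: eqP => [->|].
Qed.

End Closure.

Section Expansion.
Variables (L E : signature) (N : structure L).
Variable funsE : forall g : Fsym E, ('I_(Far g) -> N) -> N.
Variable relsE : forall q : Rsym E, ('I_(Rar q) -> N) -> Prop.

Definition expand : structure (sig_expand L E) :=
  {| carrier := N; point := point N;
     funs := fun s => match s as s0 return ('I_(@Far (sig_expand L E) s0) -> N) -> N with
                      | inl f => @funs L N f | inr g => @funsE g end;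
     rels := fun s => match s as s0 return ('I_(@Rar (sig_expand L E) s0) -> N) -> Prop with
                      | inl r => @rels L N r | inr q => @relsE q end |}.

Lemma occurs_lift x (t : term L) : occurs x (lift_term E t) <-> occurs x t.
Proof. by elim: t => [y|f args IH] //=; split=> -[i /IH h]; exists i. Qed.

Lemma free_lift x (p : formula L) : free x (Defs.lift E p) <-> free x p.
Proof.
elim: p => //=; try (intros; tauto).
- by move=> t u; rewrite !occurs_lift.
- by move=> r args; split=> -[i /occurs_lift h]; exists i.
Qed.

Lemma eval_lift (e : nat -> N) (t : term L) :
  @eval _ expand e (lift_term E t) = eval e t.
Proof.
by elim: t => [y|f args IH] //=; congr funs; apply: functional_extensionality => i.
Qed.

Lemma sat_lift (p : formula L) (e : nat -> N) :
  @sat _ expand e (Defs.lift E p) <-> sat e p.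
Proof.
elim: p e => [|t u|r args|q IH|q IHq s IHs|q IHq s IHs|q IHq s IHs|y q IH|y q IH] e /=.
- by [].
- by rewrite !eval_lift.
- suff -> : (fun i => @eval _ expand e (lift_term E (args i))) = (fun i => eval e (args i))
    by [].
  by apply: functional_extensionality => i; exact: eval_lift.
- by rewrite IH.
- by rewrite IHq IHs.
- by rewrite IHq IHs.
- by rewrite IHq IHs.
- by split=> h a; apply/IH; apply: h.
- by split=> -[a h]; exists a; apply/IH.
Qed.

End Expansion.

Section TheoryOf.
Variables (L : signature) (N : structure L).

Definition theory_of : theory L := fun s => sentence s /\ holds N s.

Lemma sentence_holds (s : formula L) (e : nat -> N) : sentence s -> sat e s -> holds N s.
Proof. by move=> ss h e'; apply/(sat_agree _ (e := e)) => // x /ss. Qed.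

Lemma complete_theory_of : complete_theory theory_of.
Proof.
split; [by move=> s [] | by exists N => s [] |].
move=> s ss; have [hs | nhs] := classic (holds N s); [left | right] => N' model.
- exact: model.
- apply: model; split=> [x /= /ss // | e hs]; apply: nhs; exact: sentence_holds hs.
Qed.

Lemma theory_of_transfer_iff n (p q : formula L) :
  (forall x, free x p -> x < n) -> (forall x, free x q -> x < n) ->
  (forall e : nat -> N, sat e p <-> sat e q) ->
  forall N' : structure L, is_model theory_of N' -> forall e, @sat _ N' e p <-> sat e q.
Proof.
move=> bp bq pq N' model e.
pose iff_pq := FAnd (FImp p q) (FImp q p).
have in_theory : theory_of (close_all n iff_pq).
  split; first by apply: close_all_sentence => x /= [[/bp | /bq] | [/bq | /bp]].
  by apply/holds_close_all => e' /=; rewrite pq.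
by have /holds_close_all /(_ e) [] := model _ in_theory.
Qed.

End TheoryOf.

Lemma expansion_theory_of (L E : signature) (T : theory L) (M : structure L)
    funsE relsE :
  (forall s, T s -> sentence s) -> is_model T M ->
  expansion T (theory_of (@expand L E M funsE relsE)).
Proof.
move=> Tsent model; split; first exact: complete_theory_of.
move=> s Ts; split=> [x /free_lift | e]; first exact: Tsent.
by rewrite sat_lift; apply: model.
Qed.

Lemma list_filter_prop (A : Type) (P : A -> Prop) (l : list A) :
  exists l', forall a, List.In a l' <-> List.In a l /\ P a.
Proof.
elim: l => [|b l [l' Hl']]; first by exists nil => a; split=> [|[]].
have [Pb | nPb] := classic (P b); [exists (b :: l') | exists l'] => a /=; rewrite Hl'.
- by split=> [[<- | []] | [[<- | la] Pa]]; tauto.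
- by split=> [[la Pa] | [[<- | la] Pa]]; tauto.
Qed.

Section Constants.
Variables (L : signature) (M : structure L).

Definition const_sig : signature :=
  {| Fsym := M; Far := fun _ => 0; Rsym := void; Rar := fun _ => 0 |}.

Definition const_expand : structure (sig_expand L const_sig) :=
  @expand L const_sig M (fun m _ => m) (fun q => match q with end).

Definition const (m : M) : term (sig_expand L const_sig) :=
  @App (sig_expand L const_sig) (inr m) (fun _ => Var _ 0).

Fixpoint eq_consts (a : nat -> M) (n : nat) : formula (sig_expand L const_sig) :=
  match n with
  | 0 => FNot (FFalse _)
  | n.+1 => FAnd (eq_consts a n) (FEq (Var _ n) (const (a n)))
  end.

Lemma sat_eq_consts a n (e : nat -> M) :
  @sat _ const_expand e (eq_consts a n) <-> forall j, j < n -> e j = a j.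
Proof.
elim: n => [|n IH] /=; first by split=> // _ [].
rewrite IH; split=> [[eq_a eq_n] j | eq_a].
- by rewrite ltnS leq_eqVlt => /orP [/eqP -> // | /eq_a].
- by split=> [j lt_jn|]; apply: eq_a; rewrite // ltnW.
Qed.

Lemma free_eq_consts a n x : free x (eq_consts a n) -> x < n.
Proof.
elim: n => [|n IH] //= [/IH /ltnW // | [-> // | [[] //]]].
Qed.

Lemma boolcomb_eq_consts a n : boolcomb (at_most_free 1) (eq_consts a n).
Proof.
elim: n => [|n IH] /=; first by do 2 constructor.
apply: bc_and => //; apply: bc_base; exists [:: n]; split=> // x [-> | [[] //]].
by rewrite mem_seq1.
Qed.

End Constants.

Section Tuples.
Variables (L : signature) (M : structure L) (k : nat).

Fixpoint mem_tuples (l : list ('I_k -> M)) : formula (sig_expand L (const_sig M)) :=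
  match l with
  | nil => FFalse _
  | a :: l => FOr (eq_consts (env_of a) k) (mem_tuples l)
  end.

Lemma sat_mem_tuples l (e : nat -> M) :
  @sat _ (const_expand M) e (mem_tuples l) <->
  exists2 a, List.In a l & forall j, j < k -> e j = env_of a j.
Proof.
elim: l => [|a l IH] /=; first by split=> // -[].
rewrite sat_eq_consts IH; split=> [[eq_a | [b lb eq_b]] | [b [<- | lb] eq_b]].
- by exists a; [left |].
- by exists b; [right |].
- by left.
- by right; exists b.
Qed.

Lemma free_mem_tuples l x : free x (mem_tuples l) -> x < k.
Proof. by elim: l => [|a l IH] //= [/free_eq_consts | /IH]. Qed.

Lemma boolcomb_mem_tuples l : boolcomb (at_most_free 1) (mem_tuples l).
Proof. by elim: l => [|a l IH] /=; constructor => //; apply: boolcomb_eq_consts. Qed.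

Lemma env_of_restrict (e : nat -> M) j : j < k -> env_of (fun i : 'I_k => e i) j = e j.
Proof. by move=> lt_jk; rewrite /env_of insubT. Qed.

Lemma sat_mem_solutions (phi : formula L) (l : list ('I_k -> M)) :
  (forall x, free x phi -> x < k) ->
  (forall a, List.In a l <-> sat (env_of a) phi) ->
  forall e : nat -> M, sat e phi <-> @sat _ (const_expand M) e (mem_tuples l).
Proof.
move=> bound sols e; rewrite sat_mem_tuples.
have agree (a : 'I_k -> M) :
    (forall j, j < k -> e j = env_of a j) -> (sat e phi <-> sat (env_of a) phi).
  by move=> eq_a; apply: sat_agree => x /bound /eq_a.
split=> [phi_e | [a la eq_a]]; last by rewrite (agree a eq_a) -sols.
exists (fun i : 'I_k => e i) => [|j /env_of_restrict //].
by rewrite sols -agree // => j /env_of_restrict.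
Qed.

End Tuples.

Lemma solution_list (L : signature) (M : structure L) k (phi : formula L) :
  finitely_many_solutions M k phi ->
  exists l : list ('I_k -> M), forall a, List.In a l <-> sat (env_of a) phi.
Proof.
move=> [l sols]; have [l' Hl'] := list_filter_prop (fun a => sat (env_of a) phi) l.
by exists l' => a; rewrite Hl'; split=> [[] | /[dup] /sols].
Qed.

Theorem proposition2p5 (L : signature) (T : theory L) (k : nat) (phi : formula L) :
  complete_theory T ->
  (forall x, free x phi -> x < k) ->
  (exists M : structure L, is_model T M /\ finitely_many_solutions M k phi) ->
  unary_tizable T phi.
Proof.
move=> [Tsent _ _] bound [M [model /solution_list [l sols]]].
exists (const_sig M), (theory_of (const_expand M)).
split; first exact: expansion_theory_of.
exists (mem_tuples l); split; first exact: boolcomb_mem_tuples.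
apply: (theory_of_transfer_iff (n := k)) => [x /free_lift /bound // | x /free_mem_tuples // | e].
by rewrite sat_lift; apply: sat_mem_solutions.
Qed.
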